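(* Let $\Gamma$ be an infinite countable group and $X$ the Cantor space. Each of the following subsets of $A(\Gamma)$ is $G_\delta$: (1) the actions with the dynamical comparison property; (2) the actions $\alpha$ such that $T(\alpha)$ is almost unperforated; (3) the actions $\alpha$ such that $T(\alpha)$ is unperforated; (4) the actions $\alpha$ such that $T(\alpha)$ is cancellative; (5) the actions $\alpha$ such that $\le$ is a partial order on $T(\alpha)$.
   Context: $A(\Gamma)$ is the space of actions of $\Gamma$ on $X$ by homeomorphisms, viewed as a closed subset of $\mathrm{Homeo}(X)^\Gamma$ with the product topology, where $\mathrm{Homeo}(X)$ carries its Polish topology (basic identity neighbourhoods: stabilizers of finite clopen partitions). Clopen type semigroup of $\alpha$: let $Y = X\times\mathbb N$, and let $\tilde\Gamma=\Gamma\times\mathfrak S$ ($\mathfrak S$ the permutation group of $\mathbb N$) act on $Y$ by $(\gamma,\sigma)(x,n)=(\alpha(\gamma)x,\sigma(n))$. A clopen $A\subseteq Y$ is bounded if $A\cap(X\times\{n\})=\emptyset$ for all large $n$. Bounded clopen $A,B$ are equidecomposable if there are clopen $A_1,\dots,A_n$ and $\tilde\gamma_i\in\tilde\Gamma$ with $A=\bigsqcup_i A_i$, $B=\bigsqcup_i\tilde\gamma_iA_i$. $T(\alpha)$ is the set of classes $[A]$, with $[A]+[B]=[A'\sqcup B']$ for disjoint representatives; $0=[\emptyset]$. $a\le b$ iff $b=a+c$ for some $c$. Almost unperforated: $(n+1)a\le nb\Rightarrow a\le b$ for $n\in\mathbb N$. Unperforated: $na\le nb\Rightarrow a\le b$ for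 $n\ge1$. Cancellative: $a+b=a+c\Rightarrow b=c$. Dynamical comparison: for all nonempty clopen $A,B\subseteq X$ with $\mu(A)<\mu(B)$ for every $\alpha$-invariant Borel probability measure $\mu$, one has $[A\times\{0\}]\le[B\times\{0\}]$. *)

From HB Require Import structures.
From mathcomp Require Import all_boot all_order all_algebra.
From mathcomp Require Import all_classical all_reals all_analysis.
From mathcomp Require Import Rstruct.

Set Implicit Arguments.
Unset Strict Implicit.
Unset Printing Implicit Defensive.

Local Open Scope classical_set_scope.

Definition X : topologicalType := cantor_space.

Definition Y : topologicalType := (cantor_space * nat)%type.

Definition clopen {T : topologicalType} (A : set T) := open A /\ closed A.

Definition homeo (f : X -> X) :=
  exists g : X -> X, [/\ cancel f g, cancel g f, continuous f & continuous g].

Definition is_action (G : groupType) (a : G -> X -> X) :=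
  [/\ forall g, homeo (a g), a 1%g = id & forall g h, a (g * h)%g = a g \o a h].

(* Topology of A(Gamma) (subspace of Homeo(X)^Gamma, product topology,
   Homeo(X) with the topology whose identity neighbourhoods are stabilizers
   of finite clopen partitions): a basic neighbourhood of the action a is
   { b | b(g_i)(P_i) = a(g_i)(P_i) for i < k } with P_i clopen. *)
Definition A_open (G : groupType) (U : set (G -> X -> X)) :=
  forall a, is_action a -> U a ->
    exists (k : nat) (gs : 'I_k -> G) (P : 'I_k -> set X),
      (forall i, clopen (P i)) /\
      (forall b, is_action b ->
         (forall i, b (gs i) @` P i = a (gs i) @` P i) -> U b).

Definition A_Gdelta (G : groupType) (S : set (G -> X -> X)) :=
  exists U : nat -> set (G -> X -> X),
    (forall n, A_open (U n)) /\
    (forall a, is_action a -> (S a <-> forall n, U n a)).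

Definition bounded (A : set Y) := exists N : nat, forall x n, (N <= n)%N -> ~ A (x, n).

Definition bclopen (A : set Y) := clopen A /\ bounded A.

(* action of (g, sigma) in Gamma x Sym(N) on Y *)
Definition tact (G : groupType) (a : G -> X -> X) (g : G) (s : nat -> nat) (p : Y) : Y :=
  (a g p.1, s p.2).

Definition pw_disjoint (k : nat) (P : 'I_k -> set Y) :=
  forall i j, i != j -> P i `&` P j = set0.

Definition eqd (G : groupType) (a : G -> X -> X) (A B : set Y) :=
  exists (k : nat) (P : 'I_k -> set Y) (gs : 'I_k -> G) (ss : 'I_k -> nat -> nat),
    [/\ forall i, clopen (P i),
        forall i, bijective (ss i),
        (A = \bigcup_i P i /\ pw_disjoint P) &
        (B = \bigcup_i (tact a (gs i) (ss i) @` P i) /\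
         pw_disjoint (fun i => tact a (gs i) (ss i) @` P i))].

(* [C] = [A] + [B] in T(a) *)
Definition is_sum (G : groupType) (a : G -> X -> X) (C A B : set Y) :=
  exists A' B', [/\ bclopen A' /\ bclopen B', eqd a A A', eqd a B B',
                    A' `&` B' = set0 & eqd a C (A' `|` B')].

(* [A] <= [B] in T(a): [B] = [A] + c for some c *)
Definition tle (G : groupType) (a : G -> X -> X) (A B : set Y) :=
  exists C, bclopen C /\ is_sum a B A C.

(* [C] = n [A] in T(a) *)
Fixpoint is_mult (G : groupType) (a : G -> X -> X) (n : nat) (A C : set Y) : Prop :=
  match n with
  | 0 => eqd a C set0
  | n'.+1 => exists D, [/\ bclopen D, is_mult a n' A D & is_sum a C D A]
  end.

Definition almost_unperforated (G : groupType) (a : G -> X -> X) :=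
  forall (n : nat) A B C D, bclopen A -> bclopen B -> bclopen C -> bclopen D ->
    is_mult a n.+1 A C -> is_mult a n B D -> tle a C D -> tle a A B.

Definition unperforated (G : groupType) (a : G -> X -> X) :=
  forall (n : nat) A B C D, (1 <= n)%N ->
    bclopen A -> bclopen B -> bclopen C -> bclopen D ->
    is_mult a n A C -> is_mult a n B D -> tle a C D -> tle a A B.

Definition cancellative (G : groupType) (a : G -> X -> X) :=
  forall A B C D, bclopen A -> bclopen B -> bclopen C -> bclopen D ->
    is_sum a D A B -> is_sum a D A C -> eqd a B C.

Definition tle_partial_order (G : groupType) (a : G -> X -> X) :=
  [/\ forall A, bclopen A -> tle a A A,
      forall A B C, bclopen A -> bclopen B -> bclopen C ->
        tle a A B -> tle a B C -> tle a A C &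
      forall A B, bclopen A -> bclopen B -> tle a A B -> tle a B A -> eqd a A B].

Definition BX := g_sigma_algebraType (@open X).

Definition invariant (G : groupType) (a : G -> X -> X)
    (mu : probability BX Rdefinitions.R) :=
  forall g (E : set BX), measurable E -> mu (a g @^-1` E) = mu E.

Definition dyn_comparison (G : groupType) (a : G -> X -> X) :=
  forall A B : set X, clopen A -> clopen B -> A !=set0 -> B !=set0 ->
    (forall mu : probability BX Rdefinitions.R, invariant a mu -> (mu A < mu B)%E) ->
    tle a (A `*` [set 0%N]) (B `*` [set 0%N]).

(* A(Γ) is second countable: a basic neighbourhood of an action α is given by
   prescribing the images of finitely many clopen sets under finitely many group
   elements, and both Γ and the clopen algebra of X are countable.  Hence closed
   subsets of A(Γ) are G_δ, and so is {α | S α -> T α} whenever S is open and T is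
   G_δ.  For fixed bounded clopen sets, each of the relations [A] = [B],
   [C] = [A] + [B], [A] <= [B] and [C] = n[A] in T(α) is witnessed by finitely many
   clopen pieces moved by finitely many group elements, so it is an open condition
   on α; as there are only countably many bounded clopen subsets of X × ℕ,
   properties (2)-(5), being countable conjunctions of implications between such
   conditions, are G_δ.  For (1) it remains to see that "μ(A) < μ(B) for every
   invariant μ" is open in α.  Otherwise there are actions β_m -> α and
   β_m-invariant probabilities μ_m with μ_m(B) <= μ_m(A); a cluster point of the
   clopen masses of the μ_m (Tychonoff) is a finitely additive probability on the
   clopen algebra, which by compactness of X extends to an α-invariant Borel
   probability μ with μ(B) <= μ(A). *)

From Pilot Require Import Defs.
From HB Require Import structures.
From mathcomp Require Import all_boot all_order all_algebra.
From mathcomp Require Import all_classical all_reals all_analysis.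
From mathcomp Require Import Rstruct Rstruct_topology lra.

Set Implicit Arguments.
Unset Strict Implicit.
Unset Printing Implicit Defensive.
Import Order.TTheory GRing.Theory Num.Theory.
Import numFieldTopology.Exports numFieldNormedType.Exports.
Local Open Scope classical_set_scope.

Lemma countable_enum (T : Type) (D : set T) :
  countable D -> D !=set0 -> exists e : nat -> T, D `<=` range e.
Proof.
move=> /pfcard_geP[->[]//|/unsquash e] _.
by exists e => x Dx; have [n _ <-] := @surj _ _ _ _ e x Dx; exists n.
Qed.

(** * The topology of A(Γ) *)

Section ActionTopology.
Variable G : groupType.
Local Notation act := (G -> X -> X).

Definition act_nbhs (a : act) (V : set act) :=
  exists k (gs : 'I_k -> G) (P : 'I_k -> set X), (forall i, clopen (P i)) /\
    forall b, is_action b -> (forall i, b (gs i) @` P i = a (gs i) @` P i) -> V b.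

Lemma act_nbhsS a (V W : set act) :
  act_nbhs a V -> (forall b, is_action b -> V b -> W b) -> act_nbhs a W.
Proof.
move=> [k [gs [P [cP VP]]]] VW; exists k, gs, P; split => // b ab agr.
exact/VW/VP.
Qed.

Lemma act_nbhsT a : act_nbhs a setT.
Proof. by exists 0%N, (fun=> 1%g), (fun=> set0); split => [[]|]. Qed.

Lemma act_nbhsI a (V W : set act) :
  act_nbhs a V -> act_nbhs a W -> act_nbhs a (V `&` W).
Proof.
move=> [k [gs [P [cP VP]]]] [l [hs [Q [cQ WQ]]]].
pose gh (i : 'I_(k + l)) := match fintype.split i with inl i => gs i | inr i => hs i end.
pose PQ (i : 'I_(k + l)) := match fintype.split i with inl i => P i | inr i => Q i end.
exists (k + l)%N, gh, PQ; split => [i|b ab agr].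
  by rewrite /PQ; case: fintype.split.
split; [apply: VP => // i; have := agr (unsplit (inl i))
       |apply: WQ => // i; have := agr (unsplit (inr i))];
  by rewrite /gh /PQ unsplitK.
Qed.

Lemma act_nbhs_image a g (P : set X) :
  clopen P -> act_nbhs a [set b | b g @` P = a g @` P].
Proof. by move=> cP; exists 1%N, (fun=> g), (fun=> P); split => // b _ /(_ ord0). Qed.

Lemma act_nbhs_bigcap a (I : finType) (V : I -> set act) :
  (forall i, act_nbhs a (V i)) -> act_nbhs a (fun b => forall i, V i b).
Proof.
move=> aV; suff : act_nbhs a [set b | forall i, i \in enum I -> V i b].
  by move/act_nbhsS; apply=> b _ Vb i; apply/Vb; rewrite mem_enum.
elim: (enum I) => [|i s IHs].
  by apply: (act_nbhsS (act_nbhsT a)) => b _ _ i; rewrite in_nil.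
apply: (act_nbhsS (act_nbhsI (aV i) IHs)) => b _ [Vb Vsb] j.
by rewrite inE => /predU1P[->//|]; exact: Vsb.
Qed.

Lemma preimage_action (a : act) g (C : set X) : is_action a -> a g @^-1` C = a g^-1%g @` C.
Proof.
move=> [_ a1 aM]; apply/seteqP; split=> [x Cgx|_ [y Cy <-]] /=.
  by exists (a g x) => //; rewrite -[a _ (a _ x)]/((a g^-1 \o a g) x)%g -aM mulVg a1.
by rewrite -[a g (a _ y)]/((a g \o a g^-1) y)%g -aM mulgV a1.
Qed.

Lemma A_open_const (P : Prop) : A_open (fun _ : act => P).
Proof. by move=> a _ p; apply: (act_nbhsS (act_nbhsT a)). Qed.

Lemma A_openU (U V : set act) : A_open U -> A_open V -> A_open (U `|` V).
Proof.
move=> oU oV a aa [Ua|Va].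
  by apply: (act_nbhsS (oU a aa Ua)) => b _ Ub; left.
by apply: (act_nbhsS (oV a aa Va)) => b _ Vb; right.
Qed.

Lemma A_open_ext (U V : set act) :
  A_open U -> (forall a, is_action a -> U a <-> V a) -> A_open V.
Proof.
move=> oU UV a aa /(UV a aa) /(oU a aa) nU.
by apply: (act_nbhsS nU) => b ab /(UV b ab).
Qed.

Lemma A_open_Gdelta (U : set act) : A_open U -> A_Gdelta U.
Proof. by move=> oU; exists (fun=> U); split => // a _; split => [|/(_ 0%N)]. Qed.

Lemma A_Gdelta_ext (S T : set act) :
  A_Gdelta S -> (forall a, is_action a -> S a <-> T a) -> A_Gdelta T.
Proof.
move=> [U [oU SU]] ST; exists U; split => // a aa; rewrite -ST //; exact: SU.
Qed.

Lemma A_Gdelta_bigcap (T : countType) (S : T -> set act) :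
  (forall t, A_Gdelta (S t)) -> A_Gdelta (fun a => forall t, S t a).
Proof.
move=> /choice[U SU].
exists (fun n => if unpickle n is Some (t, m) then U t m else setT); split.
  move=> n; case: unpickle => [[t m]|]; [exact: (SU t).1 | exact: A_open_const].
move=> a aa; split => [Sa n|Ua t].
  by case: unpickle => [[t m]|] //; apply: ((SU t).2 a aa).1.
by apply/((SU t).2 a aa) => m; have := Ua (pickle (t, m)); rewrite pickleK.
Qed.

Lemma A_GdeltaI (S T : set act) : A_Gdelta S -> A_Gdelta T -> A_Gdelta (S `&` T).
Proof.
move=> GS GT; have GST (b : bool) : A_Gdelta (if b then S else T) by case: b.
apply: (A_Gdelta_ext (A_Gdelta_bigcap GST)).
by move=> a _; split=> [ST|[Sa Ta] []//]; split; [exact: (ST true) | exact: (ST false)].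
Qed.

Lemma A_Gdelta_implyl (P : Prop) (S : set act) :
  (P -> A_Gdelta S) -> A_Gdelta (fun a => P -> S a).
Proof.
have [p /(_ p) GS|np _] := pselect P.
  by apply: (A_Gdelta_ext GS) => a _; split => [Sa _|/(_ p)].
by apply: (A_Gdelta_ext (A_open_Gdelta (@A_open_const True))) => a _; split => // _ /np.
Qed.

Lemma A_Gdelta_forall_enum (T : Type) (D : set T) (e : nat -> T) (Q : T -> set act) :
  D `<=` range e -> (forall t, D t -> A_Gdelta (Q t)) ->
  A_Gdelta (fun a => forall t, D t -> Q t a).
Proof.
move=> De GQ; apply: (A_Gdelta_ext
  (A_Gdelta_bigcap (fun n => A_Gdelta_implyl (GQ (e n))))) => a _.
by split => [Qa t /[dup] /De[n _ <-]|Qa n]; [apply: Qa|exact: Qa].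
Qed.

End ActionTopology.

(** * Bounded clopen subsets of X × ℕ *)

Definition slice (A : set Y) (n : nat) : set X := [set x | A (x, n)].

Lemma slice_clopen A n : clopen A -> clopen (slice A n).
Proof.
have cont : continuous (fun x : X => (x, n) : Y).
  by move=> x; exact: (@cvg_pair _ _ _ _ _ (nbhs n) _ _ _ id (fun=> n) cvg_id (cvg_cst n)).
move=> [oA cA]; split; first exact: open_comp (fun x _ => cont x) oA.
exact: preimage_closed (fun x _ => cont x) cA.
Qed.

Definition bounded_by (A : set Y) (N : nat) := forall x n, (N <= n)%N -> ~ A (x, n).

Lemma sub_bounded_by (A B : set Y) N : A `<=` B -> bounded_by B N -> bounded_by A N.
Proof. by move=> AB BN x n Nn /AB; exact: BN. Qed.

Lemma bounded_by_slice_lt A N x n : bounded_by A N -> A (x, n) -> (n < N)%N.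
Proof. by move=> AN Axn; rewrite ltnNge; apply/negP => /(AN x n). Qed.

Section OpenTypeRelations.
Variable G : groupType.
Local Notation act := (G -> X -> X).

Lemma tact_image_sub (a b : act) g s (A : set Y) N : bounded_by A N ->
  (forall n, (n < N)%N -> b g @` slice A n = a g @` slice A n) ->
  tact b g s @` A `<=` tact a g s @` A.
Proof.
move=> AN agr _ [[x n] Axn <-].
have [x' Ax' ax'] : (a g @` slice A n) (b g x).
  by rewrite -agr ?(bounded_by_slice_lt AN Axn) //; exists x.
by exists (x', n); rewrite // /tact /= ax'.
Qed.

Lemma tact_image_agree (a b : act) g s (A : set Y) N : bounded_by A N ->
  (forall n, (n < N)%N -> b g @` slice A n = a g @` slice A n) ->
  tact b g s @` A = tact a g s @` A.
Proof.
move=> AN agr; apply/seteqP; split; first exact: tact_image_sub agr.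
by apply: tact_image_sub AN _ => n nN; rewrite agr.
Qed.

Lemma A_open_eqd (A B : set Y) : bounded A -> A_open [set a : act | eqd a A B].
Proof.
move=> [N AN] a _ [k [P [gs [ss [cP ss_bij [AP Pdisj] [BP aPdisj]]]]]].
have PN i : bounded_by (P i) N by apply: sub_bounded_by AN; rewrite AP; exact: bigcup_sup.
have nbhs : act_nbhs a [set b | forall i (n : 'I_N),
    b (gs i) @` slice (P i) n = a (gs i) @` slice (P i) n].
  apply: act_nbhs_bigcap => i; apply: act_nbhs_bigcap => n.
  exact: act_nbhs_image (slice_clopen n (cP i)).
apply: (act_nbhsS nbhs) => b _ agr.
have bPaP : (fun i => tact b (gs i) (ss i) @` P i) = (fun i => tact a (gs i) (ss i) @` P i).
  apply: funext => i; apply: (tact_image_agree _ (PN i)) => n nN.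
  exact: (agr i (Ordinal nN)).
by exists k, P, gs, ss; rewrite bPaP.
Qed.

Lemma A_open_is_sum (C A B : set Y) : bounded C -> bounded A -> bounded B ->
  A_open [set a : act | is_sum a C A B].
Proof.
move=> bC bA bB a aa [A' [B' [bAB' AA' BB' AB'0 CAB']]].
have nbhs := act_nbhsI (act_nbhsI (A_open_eqd bA aa AA') (A_open_eqd bB aa BB'))
                       (A_open_eqd bC aa CAB').
by apply: (act_nbhsS nbhs) => b _ [[? ?] ?]; exists A', B'.
Qed.

Lemma A_open_tle (A B : set Y) : bounded A -> bounded B -> A_open [set a : act | tle a A B].
Proof.
move=> bA bB a aa [C [bcC BAC]].
by apply: (act_nbhsS (A_open_is_sum bB bA bcC.2 aa BAC)) => b _ ?; exists C.
Qed.

Lemma A_open_is_mult n (A C : set Y) : bounded A -> bounded C ->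
  A_open [set a : act | is_mult a n A C].
Proof.
move=> bA; elim: n C => [|n IHn] C bC; first exact: A_open_eqd.
move=> a aa [D [bcD nAD CDA]].
have nbhs := act_nbhsI (IHn D bcD.2 a aa nAD) (A_open_is_sum bC bcD.2 bA aa CDA).
by apply: (act_nbhsS nbhs) => b _ [? ?]; exists D.
Qed.

End OpenTypeRelations.

Definition stack (s : seq (set X)) : set Y := [set p | nth set0 s p.2 p.1].

Lemma stack_slices A N : bounded_by A N -> stack (mkseq (slice A) N) = A.
Proof.
move=> AN; apply/seteqP; split=> -[x n]; rewrite /stack /=.
  have [nN|Nn] := ltnP n N; first by rewrite nth_mkseq.
  by rewrite nth_default ?size_mkseq.
by move=> Axn; rewrite nth_mkseq // (bounded_by_slice_lt AN Axn).
Qed.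

Lemma bclopen_enum (cl : nat -> set X) :
  clopen `<=` range cl -> exists e : nat -> set Y, bclopen `<=` range e.
Proof.
move=> cl_surj; exists (fun m => stack (map cl (odflt [::] (unpickle m)))).
move=> A [cA [N AN]]; have /choice[j jA] n : exists j, cl j = slice A n.
  by have [j _ <-] := cl_surj _ (slice_clopen n cA); exists j.
exists (pickle (mkseq j N)) => //; rewrite pickleK /= -(stack_slices AN).
congr stack; apply: (@eq_from_nth _ set0); rewrite size_map ?size_mkseq // => i iN.
by rewrite (nth_map 0%N) ?size_mkseq // !nth_mkseq.
Qed.

(** * Borel probabilities from clopen masses *)

Section CoordinateClosedSets.
Variables (I : eqType) (R : realType).
Local Open Scope ring_scope.
Local Notation K := (prod_topology (fun _ : I => (R : topologicalType))).

Lemma closed_continuous_eq0 (phi : K -> R) : continuous phi -> closed [set f | phi f = 0].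
Proof. by move=> cphi; exact: (preimage_closed (fun f _ => cphi f) (@closed_eq _ 0)). Qed.

Lemma closed_continuous_le0 (phi : K -> R) : continuous phi -> closed [set f | phi f <= 0].
Proof. by move=> cphi; exact: (preimage_closed (fun f _ => cphi f) (@closed_le _ 0)). Qed.

Lemma continuous_subr (p q : K -> R) :
  continuous p -> continuous q -> continuous (fun f => p f - q f).
Proof.
move=> cp cq f; have -> : (fun f => p f - q f) = (p - q)%R by [].
exact: (continuousB (cp f) (cq f)).
Qed.

Lemma coord_continuous (i : I) : continuous (fun f : K => f i).
Proof. exact: proj_continuous. Qed.

End CoordinateClosedSets.

Local Open Scope ring_scope.
Local Notation R := Rdefinitions.R.

(* [cantor_space] carries no metric instance, which [clopen_surj] needs; the product
   of the discrete metric spaces [bool] induces the same topology. *)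
Definition cantor_pseudoMetric : Type :=
  @prod_topology nat (fun=> (bool : pseudoMetricType R)).
#[local] HB.instance Definition _ := PseudoMetric.on cantor_pseudoMetric.
#[local] HB.instance Definition _ := isPointed.Build cantor_pseudoMetric (fun=> false).

Lemma clopen_enum : exists cl : nat -> set X,
  (forall j, clopen (cl j)) /\ clopen `<=` range cl.
Proof.
have /unsquash cl := @clopen_surj R cantor_pseudoMetric cantor_space_compact.
exists cl; split=> [j|C cC]; first exact: funS.
by have [j _ <-] := @surj _ _ _ _ cl C cC; exists j.
Qed.

Lemma open_bigcup_clopen (U : set X) : open U ->
  exists F : nat -> set X, (forall n, clopen (F n)) /\ U = \bigcup_n F n.
Proof.
move=> oU; have [cl [cl_clopen cl_surj]] := clopen_enum.
exists (fun j => if `[< cl j `<=` U >] then cl j else set0); split=> [j|].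
  by case: asboolP => _; [exact: cl_clopen | exact: clopen0].
apply/seteqP; split=> [x Ux|x [j _]]; last by case: asboolP => // clU /clU.
have [D [Dx cD] DU] := zero_dimensional_cvg cantor_space_hausdorff
  cantor_zero_dimensional cantor_space_compact (open_nbhs_nbhs (conj oU Ux)).
have [j _ clD] := cl_surj _ cD; subst D.
by exists j => //; rewrite asboolT.
Qed.

Lemma measurable_BX : @measurable _ BX = <<s @clopen X >>.
Proof.
apply/seteqP; split; apply: smallest_sub; try exact: smallest_sigma_algebra.
  move=> U /open_bigcup_clopen[F [cF ->]].
  by apply: sigma_algebra_bigcup => n; exact: sub_sigma_algebra.
by move=> A [oA _]; exact: sub_sigma_algebra.
Qed.

Lemma clopen_measurable (C : set X) : clopen C -> measurable (C : set BX).
Proof. by move=> [oC _]; exact: sub_sigma_algebra. Qed.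

Lemma trivIset_open_eventually_set0 (T : ptopologicalType) (F : nat -> set T) :
  compact [set: T] -> (forall i, open (F i)) -> trivIset setT F ->
  closed (\bigcup_n F n) -> exists N, forall i, (N <= i)%N -> F i = set0.
Proof.
move=> cT oF tF cF.
have : compact (\bigcup_n F n) by exact: subclosed_compact cF cT (subsetT _).
rewrite compact_cover => /(_ nat setT F (fun i _ => oF i)) [x [i _ Fix]|].
  by exists i.
move=> D _ cov; exists (\max_(i <- finmap.enum_fset D) i).+1 => i Di.
apply/seteqP; split => // x Fix; have [j /= jD Fjx] := cov x (ex_intro2 _ _ i I Fix).
have ji : (j < i)%N.
  by apply: leq_trans Di; rewrite ltnS (@leq_bigmax_seq _ _ xpredT id).
have := (trivIsetP.1 tF) i j I I; rewrite neq_ltn ji orbT => /(_ isT) Fij0.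
by have : (F i `&` F j) x by []; rewrite Fij0.
Qed.

Definition cantor_clopens : Type := cantor_space.
HB.instance Definition _ := Pointed.on cantor_clopens.

Lemma clopen_setD : setD_closed (@clopen cantor_space).
Proof. by move=> A B cA cB; rewrite setDE; apply: clopenI => //; exact: clopenC. Qed.

HB.instance Definition _ := @isRingOfSets.Build default_measure_display cantor_clopens
  (@clopen cantor_space) clopen0 clopenU clopen_setD.

(* A finitely additive probability on the clopen algebra is σ-additive there by
   compactness of X, hence extends to a Borel probability. *)
Section ClopenContent.
Variable nu0 : set X -> R.
Hypothesis nu0_additive : forall A B, clopen A -> clopen B -> A `&` B = set0 ->
  nu0 (A `|` B) = nu0 A + nu0 B.
Hypothesis nu0_ge0 : forall A, clopen A -> 0 <= nu0 A.
Hypothesis nu0_setT : nu0 setT = 1.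

Definition clopen_content (A : set cantor_clopens) : \bar R :=
  (if `[< clopen A >] then nu0 A else 0)%:E.

Lemma clopen_contentE A : clopen A -> clopen_content A = (nu0 A)%:E.
Proof. by move=> cA; rewrite /clopen_content asboolT. Qed.

Let clopen_content0 : clopen_content set0 = 0%E.
Proof.
have nu00 : nu0 set0 = 0.
  by have := nu0_additive clopen0 clopen0 (setI0 _); rewrite setU0; lra.
by rewrite clopen_contentE ?nu00 //; exact: clopen0.
Qed.

Let clopen_content_ge0 A : (0 <= clopen_content A)%E.
Proof. by rewrite /clopen_content lee_fin; case: asboolP => // /nu0_ge0. Qed.

Let clopen_content_additive : measure_function.additive clopen_content.
Proof.
rewrite -semi_additiveE; apply/additive2P => // A B cA cB AB0.
by rewrite !clopen_contentE ?nu0_additive //; exact: clopenU.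
Qed.

Let clopen_content_sigma_additive : semi_sigma_additive clopen_content.
Proof.
move=> F cF tF cUF; have [N FN] := trivIset_open_eventually_set0
  cantor_space_compact (fun i => (cF i).1) tF cUF.2.
apply: cvg_near_cst; exists N => // n /= Nn.
rewrite big_mkord -clopen_content_additive //; congr clopen_content.
apply/seteqP; split=> [x|x [i _ Fix]]; first by rewrite -bigcup_mkord => -[i _ Fix]; exists i.
rewrite -bigcup_mkord; have [ni|ni] := ltnP i n; first by exists i.
by move: Fix; rewrite FN // (leq_trans Nn ni).
Qed.

HB.instance Definition _ := isMeasure.Build _ cantor_clopens R clopen_content
  clopen_content0 clopen_content_ge0 clopen_content_sigma_additive.

Definition clopen_extension : set BX -> \bar R := measure_extension clopen_content.

Let clopen_extension0 : clopen_extension set0 = 0%E.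
Proof. exact: measure0. Qed.

Let clopen_extension_ge0 A : (0 <= clopen_extension A)%E.
Proof. exact: measure_ge0. Qed.

Let clopen_extension_sigma_additive : semi_sigma_additive clopen_extension.
Proof.
move=> F mF tF mUF; rewrite measurable_BX in mF mUF.
exact: (@measure_semi_sigma_additive _ _ _ (measure_extension clopen_content) F mF tF mUF).
Qed.

HB.instance Definition _ := isMeasure.Build _ BX R clopen_extension
  clopen_extension0 clopen_extension_ge0 clopen_extension_sigma_additive.

Lemma clopen_extensionE A : clopen A -> clopen_extension A = (nu0 A)%:E.
Proof.
move=> cA; rewrite /clopen_extension /measure_extension measurable_mu_extE //.
exact: clopen_contentE.
Qed.

Let clopen_extension_setT : clopen_extension setT = 1%E.
Proof. by rewrite clopen_extensionE ?nu0_setT //; exact: clopenT. Qed.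

HB.instance Definition _ :=
  Measure_isProbability.Build _ BX R clopen_extension clopen_extension_setT.

Lemma clopen_content_probability :
  exists nu : probability BX R, forall A, clopen A -> nu A = (nu0 A)%:E.
Proof. by exists clopen_extension; exact: clopen_extensionE. Qed.

End ClopenContent.

Lemma continuous_measurable (h : X -> X) :
  continuous h -> measurable_fun [set: BX] (h : BX -> BX).
Proof.
move=> ch; apply: (@measurability _ _ BX BX setT h (@open X)) => // _ [B oB <-].
by rewrite setTI; apply: sub_sigma_algebra; exact: open_comp (fun x _ => ch x) oB.
Qed.

Lemma probability_preimage_clopen (nu : probability BX R) (h : X -> X) : continuous h ->
  (forall C, clopen C -> nu (h @^-1` C) = nu C) ->
  forall E : set BX, measurable E -> nu (h @^-1` E) = nu E.
Proof.
move=> ch nuC E mE; have mh := continuous_measurable ch.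
have -> : nu (h @^-1` E) = pushforward nu (h : BX -> BX) E by [].
apply/esym/(@measure_unique _ R BX (@clopen X) (fun=> setT) measurable_BX clopenI
  (fun=> clopenT)) => //.
- by rewrite bigcup_const.
- by move=> A cA; exact: (esym (nuC A cA)).
- by move=> _; have := probability_setT nu; rewrite /= => ->; exact: ltry.
Qed.

Local Notation K := (prod_topology (fun _ : set X => (R : topologicalType))).

(* Non-clopen sets get mass 0, so that all coordinates lie in [0, 1]. *)
Definition clopen_mass (mu : set BX -> \bar R) : K :=
  fun C => if `[< clopen C >] then fine (mu C) else 0.

Lemma clopen_massE (mu : probability BX R) C : clopen C -> mu C = (clopen_mass mu C)%:E.
Proof.
move=> cC; rewrite /clopen_mass asboolT // fineK // fin_num_measure //.
exact: clopen_measurable.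
Qed.

Lemma probability_cluster (mus : nat -> probability BX R) :
  exists (nu : probability BX R) (f : K), (forall C, clopen C -> nu C = (f C)%:E) /\
    forall Z : set K, closed Z -> (\forall m \near \oo, Z (clopen_mass (mus m))) -> Z f.
Proof.
pose x m := clopen_mass (mus m).
have x01 m C : `[0, 1]%classic (x m C).
  rewrite /= in_itv /= -!(@lee_fin R); have [cC|ncC] := pselect (clopen C).
    rewrite -clopen_massE // measure_ge0 -(probability_setT (mus m)) /=.
    by apply: le_measure; rewrite ?inE //; exact: clopen_measurable.
  by rewrite /x /clopen_mass asboolF // lexx lee01.
have [f [f01 fx]] : [set f : K | forall C, `[0, 1]%classic (f C)] `&` cluster (x @ \oo) !=set0.
  apply: (tychonoff (fun=> @segment_compact R 0 1)).
  by exists 0%N => // m _ C; exact: x01.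
have near_f (Z : set K) : closed Z -> (\forall m \near \oo, Z (x m)) -> Z f.
  by move=> cZ xZ; apply: cZ => V fV; exact: fx xZ fV.
have f_additive A B : clopen A -> clopen B -> A `&` B = set0 -> f (A `|` B) = f A + f B.
  move=> cA cB AB0; suff : f (A `|` B) - f A - f B = 0 by lra.
  apply: (near_f [set g | g (A `|` B) - g A - g B = 0]).
    by apply/closed_continuous_eq0/continuous_subr; [apply: continuous_subr|];
       exact: coord_continuous.
  apply: nearW => m /=; have : (mus m (A `|` B) = mus m A + mus m B)%E.
    exact: measureU (clopen_measurable cA) (clopen_measurable cB) AB0.
  rewrite (clopen_massE (mus m) cA) (clopen_massE (mus m) cB).
  by rewrite (clopen_massE (mus m) (clopenU cA cB)) /x => -[->]; lra.
have f_ge0 C : clopen C -> 0 <= f C by move=> _; have := f01 C; rewrite /= in_itv => /andP[].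
have fT : f setT = 1.
  suff : f setT - 1 = 0 by lra.
  apply: (near_f [set g | g setT - 1 = 0]).
    exact/closed_continuous_eq0/continuous_subr/cst_continuous/coord_continuous.
  apply: nearW => m /=; have : mus m [set: X] = 1%E by exact: probability_setT.
  by rewrite (clopen_massE (mus m) clopenT) /x => -[->]; lra.
have [nu nuf] := clopen_content_probability f_additive f_ge0 fT.
by exists nu, f.
Qed.

Lemma invariant_probability_limit (G : groupType) (a : G -> X -> X)
    (bs : nat -> G -> X -> X) (mus : nat -> probability BX R) (A B : set X) :
  is_action a -> clopen A -> clopen B ->
  (forall m, Defs.invariant (bs m) (mus m)) ->
  (forall g C, clopen C -> \forall m \near \oo, bs m g @^-1` C = a g @^-1` C) ->
  (forall m, mus m B <= mus m A)%E ->
  exists nu : probability BX R, Defs.invariant a nu /\ (nu B <= nu A)%E.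
Proof.
move=> aa cA cB bs_inv bs_cvg muBA.
have [nu [f [nuf near_f]]] := probability_cluster mus.
exists nu; split.
  move=> g E mE; have ag : continuous (a g) by case: aa => /(_ g) [? [_ _ ? _]].
  apply: (probability_preimage_clopen ag) mE => C cC.
  have cgC := preimage_clopen cC ag.
  rewrite !nuf //; congr EFin; suff : f (a g @^-1` C) - f C = 0 by lra.
  apply: (near_f [set h | h (a g @^-1` C) - h C = 0]).
    by apply/closed_continuous_eq0/continuous_subr; exact: coord_continuous.
  apply: (filterS _ (bs_cvg g C cC)) => m /= bgC.
  have := bs_inv m g C (clopen_measurable cC); rewrite bgC.
  by rewrite (clopen_massE _ cgC) (clopen_massE _ cC) => -[->]; lra.
rewrite !nuf // lee_fin; suff : f B - f A <= 0 by lra.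
apply: (near_f [set h | h B - h A <= 0]).
  by apply/closed_continuous_le0/continuous_subr; exact: coord_continuous.
apply: nearW => m /=; have := muBA m.
by rewrite (clopen_massE _ cA) (clopen_massE _ cB) lee_fin; lra.
Qed.

(** * Second countability of A(Γ) and the G_δ properties *)

Section CountableBase.
Variable G : groupType.
Local Notation act := (G -> X -> X).
Variables (ge : nat -> G) (cl : nat -> set X).
Hypotheses (ge_surj : [set: G] `<=` range ge) (cl_clopen : forall j, clopen (cl j)).
Hypothesis cl_surj : clopen `<=` range cl.

(* The sets [agree_upto m a] form a countable neighbourhood base at [a]. *)
Definition agree_upto m (a b : act) :=
  forall i j : 'I_m, b (ge i) @` cl j = a (ge i) @` cl j.

Lemma act_nbhs_agree_upto m a : act_nbhs a (agree_upto m a).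
Proof.
by apply: act_nbhs_bigcap => i; apply: act_nbhs_bigcap => j; exact: act_nbhs_image.
Qed.

Lemma agree_uptoW m n a b : (m <= n)%N -> agree_upto n a b -> agree_upto m a b.
Proof. by move=> mn agr i j; exact: (agr (widen_ord mn i) (widen_ord mn j)). Qed.

Lemma agree_upto_image g (C : set X) : clopen C ->
  exists m, forall a b, agree_upto m a b -> b g @` C = a g @` C.
Proof.
move=> /cl_surj[j _ <-]; have [i _ <-] := ge_surj (I : setT g).
exists (maxn i j).+1 => a b agr.
exact: (agr (Ordinal (leq_ltn_trans (leq_maxl i j) (ltnSn _)))
            (Ordinal (leq_ltn_trans (leq_maxr i j) (ltnSn _)))).
Qed.

Lemma agree_upto_finite k (gs : 'I_k -> G) (P : 'I_k -> set X) :
  (forall i, clopen (P i)) -> exists m, forall a b, agree_upto m a b ->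
    forall i, b (gs i) @` P i = a (gs i) @` P i.
Proof.
move=> cP; have /choice[m agrm] i := agree_upto_image (gs i) (cP i).
exists (\max_i m i) => a b agr i; apply: (agrm i); apply: agree_uptoW agr.
exact: leq_bigmax.
Qed.

Lemma closed_A_Gdelta (S : set act) : A_open (fun a => ~ S a) -> A_Gdelta S.
Proof.
move=> oNS; exists (fun m a => exists2 b, is_action b /\ S b & agree_upto m a b).
split=> [m a _ [b bS agr]|a aa].
  apply: (act_nbhsS (act_nbhs_agree_upto m a)) => c _ agr'.
  by exists b => // i j; rewrite agr agr'.
split=> [Sa m|Sa]; first by exists a.
apply: contrapT => nSa; have [k [gs [P [cP nbhs]]]] := oNS a aa nSa.
have [m agrm] := agree_upto_finite gs cP.
have [b [ab Sb] agr] := Sa m.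
exact: nbhs b ab (agrm _ _ agr) Sb.
Qed.

Lemma A_Gdelta_imply (S T : set act) :
  A_open S -> A_Gdelta T -> A_Gdelta (fun a => S a -> T a).
Proof.
move=> oS [V [oV TV]]; have [|U [oU NSU]] := @closed_A_Gdelta (fun a => ~ S a).
  by apply: (A_open_ext oS) => a _; split=> [Sa nnSa|/contrapT].
apply: (A_Gdelta_ext (A_Gdelta_bigcap (fun mn : nat * nat =>
  A_open_Gdelta (A_openU (oU mn.1) (oV mn.2))))) => a aa.
split=> [UV Sa|ST [m n]].
  have /existsNP[m nUm] : ~ forall m, U m a by move/(NSU a aa).
  by apply/(TV a aa) => n; case: (UV (m, n)).
have [/ST/(TV a aa)|nSa] := pselect (S a); first by right.
by left; exact: (NSU a aa).1 nSa m.
Qed.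

Lemma A_Gdelta_forall_bclopen (Q : set Y -> set act) :
  (forall A, bclopen A -> A_Gdelta (Q A)) -> A_Gdelta (fun a => forall A, bclopen A -> Q A a).
Proof. by have [e /A_Gdelta_forall_enum] := bclopen_enum cl_surj; apply. Qed.

Lemma cancellative_Gdelta : A_Gdelta (@cancellative G).
Proof.
apply: (@A_Gdelta_ext _ (fun a => forall A, bclopen A -> forall B, bclopen B ->
  forall C, bclopen C -> forall D, bclopen D ->
  is_sum a D A B -> is_sum a D A C -> eqd a B C)).
  apply: A_Gdelta_forall_bclopen => A [_ bA]; apply: A_Gdelta_forall_bclopen => B [_ bB].
  apply: A_Gdelta_forall_bclopen => C [_ bC]; apply: A_Gdelta_forall_bclopen => D [_ bD].
  exact: A_Gdelta_imply (A_open_is_sum bD bA bB)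
           (A_Gdelta_imply (A_open_is_sum bD bA bC) (A_open_Gdelta (A_open_eqd bB))).
move=> a _; split=> H.
- by move=> A B C D bA bB bC bD; exact: H.
- by move=> A bA B bB C bC D bD; exact: H.
Qed.

Lemma almost_unperforated_Gdelta : A_Gdelta (@almost_unperforated G).
Proof.
apply: (@A_Gdelta_ext _ (fun a => forall n, forall A, bclopen A -> forall B, bclopen B ->
  forall C, bclopen C -> forall D, bclopen D ->
  is_mult a n.+1 A C -> is_mult a n B D -> tle a C D -> tle a A B)).
  apply: A_Gdelta_bigcap => n.
  apply: A_Gdelta_forall_bclopen => A [_ bA]; apply: A_Gdelta_forall_bclopen => B [_ bB].
  apply: A_Gdelta_forall_bclopen => C [_ bC]; apply: A_Gdelta_forall_bclopen => D [_ bD].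
  exact: A_Gdelta_imply (A_open_is_mult (n := n.+1) bA bC)
    (A_Gdelta_imply (A_open_is_mult (n := n) bB bD)
      (A_Gdelta_imply (A_open_tle bC bD) (A_open_Gdelta (A_open_tle bA bB)))).
move=> a _; split=> [H n A B C D bA bB bC bD|H n A bA B bB C bC D bD].
  exact: (H n A bA B bB C bC D bD).
exact: (H n A B C D bA bB bC bD).
Qed.

Lemma unperforated_Gdelta : A_Gdelta (@unperforated G).
Proof.
apply: (@A_Gdelta_ext _ (fun a => forall n, (1 <= n)%N -> forall A, bclopen A ->
  forall B, bclopen B -> forall C, bclopen C -> forall D, bclopen D ->
  is_mult a n A C -> is_mult a n B D -> tle a C D -> tle a A B)).
  apply: A_Gdelta_bigcap => n; apply: A_Gdelta_implyl => _.
  apply: A_Gdelta_forall_bclopen => A [_ bA]; apply: A_Gdelta_forall_bclopen => B [_ bB].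
  apply: A_Gdelta_forall_bclopen => C [_ bC]; apply: A_Gdelta_forall_bclopen => D [_ bD].
  exact: A_Gdelta_imply (A_open_is_mult (n := n) bA bC)
    (A_Gdelta_imply (A_open_is_mult (n := n) bB bD)
      (A_Gdelta_imply (A_open_tle bC bD) (A_open_Gdelta (A_open_tle bA bB)))).
move=> a _; split=> [H n A B C D n1 bA bB bC bD|H n n1 A bA B bB C bC D bD].
  exact: (H n n1 A bA B bB C bC D bD).
exact: (H n A B C D n1 bA bB bC bD).
Qed.

Lemma tle_partial_order_Gdelta : A_Gdelta (@tle_partial_order G).
Proof.
have refl : A_Gdelta (fun a : act => forall A, bclopen A -> tle a A A).
  by apply: A_Gdelta_forall_bclopen => A [_ bA]; exact/A_open_Gdelta/A_open_tle.
have trans : A_Gdelta (fun a : act => forall A, bclopen A -> forall B, bclopen B ->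
    forall C, bclopen C -> tle a A B -> tle a B C -> tle a A C).
  apply: A_Gdelta_forall_bclopen => A [_ bA]; apply: A_Gdelta_forall_bclopen => B [_ bB].
  apply: A_Gdelta_forall_bclopen => C [_ bC].
  exact: A_Gdelta_imply (A_open_tle bA bB)
           (A_Gdelta_imply (A_open_tle bB bC) (A_open_Gdelta (A_open_tle bA bC))).
have antisym : A_Gdelta (fun a : act => forall A, bclopen A -> forall B, bclopen B ->
    tle a A B -> tle a B A -> eqd a A B).
  apply: A_Gdelta_forall_bclopen => A [_ bA]; apply: A_Gdelta_forall_bclopen => B [_ bB].
  exact: A_Gdelta_imply (A_open_tle bA bB)
           (A_Gdelta_imply (A_open_tle bB bA) (A_open_Gdelta (A_open_eqd bA))).
apply: (A_Gdelta_ext (A_GdeltaI refl (A_GdeltaI trans antisym))) => a _.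
split=> [[r [t s]]|[r t s]].
  split=> // [A B C bA bB bC|A B bA bB]; [exact: (t A bA B bB C bC) | exact: s].
split=> //; split=> [A bA B bB C bC|A bA B bB]; [exact: (t A B C bA bB bC) | exact: s].
Qed.

Definition invariant_lt (a : act) (A B : set X) :=
  forall mu : probability BX R, Defs.invariant a mu -> (mu A < mu B)%E.

Lemma A_open_invariant_lt (A B : set X) : clopen A -> clopen B ->
  A_open (fun a => invariant_lt a A B).
Proof.
move=> cA cB a aa aAB; apply: contrapT => nbhs.
(* Otherwise actions agreeing with [a] up to [m] carry invariant probabilities
   violating the inequality, and a limit of these is [a]-invariant. *)
have /choice[bmu bmuP] m : exists bmu : act * probability BX R,
    [/\ is_action bmu.1, agree_upto m a bmu.1, Defs.invariant bmu.1 bmu.2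
      & (bmu.2 B <= bmu.2 A)%E].
  apply: contrapT => nb; apply: nbhs; apply: (act_nbhsS (act_nbhs_agree_upto m a)).
  move=> b ab agr mu bmu; rewrite ltNge; apply/negP => muBA.
  by apply: nb; exists (b, mu).
pose bs m := (bmu m).1; pose mus m := (bmu m).2.
have bs_inv m : Defs.invariant (bs m) (mus m) by case: (bmuP m).
have musBA m : (mus m B <= mus m A)%E by case: (bmuP m).
have bs_cvg g C : clopen C -> \forall m \near \oo, bs m g @^-1` C = a g @^-1` C.
  move=> cC; have [m0 agr_m0] := agree_upto_image g^-1%g cC.
  exists m0 => // m /= m0m; have [bsa agr _ _] := bmuP m.
  by rewrite !preimage_action //; apply/agr_m0/(agree_uptoW m0m).
have [nu [nu_inv nuBA]] := invariant_probability_limit aa cA cB bs_inv bs_cvg musBA.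
by have := aAB nu nu_inv; rewrite ltNge nuBA.
Qed.

Lemma dyn_comparison_Gdelta : A_Gdelta (@dyn_comparison G).
Proof.
have bounded0 (C : set X) : bounded (C `*` [set 0%N]).
  by exists 1%N => x n n1 [_ /= n0]; rewrite n0 in n1.
apply: (@A_Gdelta_ext _ (fun a => forall A, clopen A -> forall B, clopen B ->
  A !=set0 -> B !=set0 -> invariant_lt a A B -> tle a (A `*` [set 0%N]) (B `*` [set 0%N]))).
  apply: (A_Gdelta_forall_enum cl_surj) => A cA.
  apply: (A_Gdelta_forall_enum cl_surj) => B cB.
  do 2 apply: A_Gdelta_implyl => _.
  exact: A_Gdelta_imply (A_open_invariant_lt cA cB)
           (A_open_Gdelta (A_open_tle (bounded0 A) (bounded0 B))).
move=> a _; split=> [H A B cA cB|H A cA B cB]; first exact: H.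
exact: (H A B cA cB).
Qed.

End CountableBase.

Theorem mainTheorem19 (G : groupType)
  (G_countable : countable [set: G]) (G_infinite : infinite_set [set: G]) :
  [/\ A_Gdelta (@dyn_comparison G),
      A_Gdelta (@almost_unperforated G),
      A_Gdelta (@unperforated G),
      A_Gdelta (@cancellative G) &
      A_Gdelta (@tle_partial_order G)].
Proof.
(* The group need not be infinite. *)
have [ge ge_surj] := countable_enum G_countable (ex_intro _ 1%g I).
have [cl [cl_clopen cl_surj]] := clopen_enum.
split.
- exact: dyn_comparison_Gdelta ge_surj cl_clopen cl_surj.
- exact: almost_unperforated_Gdelta ge_surj cl_clopen cl_surj.
- exact: unperforated_Gdelta ge_surj cl_clopen cl_surj.
- exact: cancellative_Gdelta ge_surj cl_clopen cl_surj.
- exact: tle_partial_order_Gdelta ge_surj cl_clopen cl_surj.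
Qed.
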